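(* Fix real numbers $\{\Theta_{kj}\}_{k,j\in[K]}$. For $\mathbf{P}\in[0,1]^K$ and $(\boldsymbol{\alpha},\boldsymbol{\gamma})\in[-\pi,\pi)^{2K}$ let $\beta_{kj}=\cos^2(\alpha_j+\Theta_{kj}-\Theta_{jj}-\gamma_k)$ and $R_{sum}(\mathbf{P},\boldsymbol{\alpha},\boldsymbol{\gamma})=\sum_{k=1}^K\ln\!\left(1+\frac{P_k\beta_{kk}}{\sum_{j\ne k}P_j\beta_{kj}+\frac12}\right)$. Then for any $\mathbf{P}\in[0,1]^K$ and $(\boldsymbol{\alpha},\boldsymbol{\gamma})\in[-\pi,\pi)^{2K}$, $$R_{sum}(\mathbf{P},\boldsymbol{\alpha},\boldsymbol{\gamma})\le 2\max_{\mathcal{S}\subset[K]}R_{sum}(\mathbf{1}_{\mathcal{S}},\boldsymbol{\alpha},\boldsymbol{\gamma}),$$ where $\mathbf{1}_{\mathcal{S}}\in\{0,1\}^K$ has $k$-th component $1$ if $k\in\mathcal{S}$ and $0$ otherwise. *)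

(* concrete reals R. Indices [K] = {0,...,K-1}. *)
From Stdlib Require Import Reals List.
Open Scope R_scope.

Definition sumK (K : nat) (f : nat -> R) : R :=
  fold_right Rplus 0 (map f (seq 0 K)).

Definition sumK_ne (K k : nat) (f : nat -> R) : R :=
  fold_right Rplus 0 (map f (filter (fun j => negb (Nat.eqb j k)) (seq 0 K))).

Definition beta (Theta : nat -> nat -> R) (alpha gamma : nat -> R) (k j : nat) : R :=
  (cos (alpha j + Theta k j - Theta j j - gamma k)) ^ 2.

Definition Rsum (K : nat) (Theta : nat -> nat -> R)
  (P alpha gamma : nat -> R) : R :=
  sumK K (fun k =>
    ln (1 + P k * beta Theta alpha gamma k k /
            (sumK_ne K k (fun j => P j * beta Theta alpha gamma k j) + / 2))).

Definition indic (S : nat -> bool) : nat -> R := fun k => if S k then 1 else 0.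

(* Let H(P) = sum_k P_k ln(1 + beta_kk / (I_k(P) + 1/2)), where I_k(P) is the interference
   seen by user k.  Termwise, ln(1 + p y) <= p y <= 2 p ln(1 + y) for p in [0,1] and
   y = beta_kk / (I_k + 1/2) in [0,2], so R_sum(P) <= 2 H(P).  As a function of a single
   power P_m, H is convex: I_k is affine in P_m and x |-> ln(1 + c/x) is convex, while
   I_m does not depend on P_m.  Hence each coordinate can be rounded to 0 or 1 without
   decreasing H, and on 0/1 vectors H coincides with R_sum. *)

From Stdlib Require Import Reals List Arith Lra Lia FunctionalExtensionality.
From Coquelicot Require Import Coquelicot.
Open Scope R_scope.

Lemma ln_1p_le x : 0 <= x -> ln (1 + x) <= x.
Proof.
  intros Hx. rewrite <- (ln_exp x) at 2. apply ln_le; [lra | apply exp_ineq1_le].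
Qed.

Lemma ln_1p_ge y : 0 <= y -> 2 * y / (2 + y) <= ln (1 + y).
Proof.
  intros Hy.
  destruct (Req_dec_T y 0) as [-> | Hy0].
  { rewrite !Rplus_0_r, ln_1. unfold Rdiv. lra. }
  set (h := fun z => ln (1 + z) - 2 * z / (2 + z)).
  assert (Hh0 : h 0 = 0).
  { unfold h. rewrite !Rplus_0_r, ln_1. unfold Rdiv. lra. }
  destruct (MVT_cor2 h (fun z => z * z / ((1 + z) * ((2 + z) * (2 + z)))) 0 y)
    as [c [Hc Hc_range]]; [lra | |].
  - intros c Hc. apply is_derive_Reals. unfold h. auto_derive; [lra|]. field; lra.
  - assert (0 <= c * c / ((1 + c) * ((2 + c) * (2 + c)))).
    { apply Rmult_le_pos; [nra|]. apply Rlt_le, Rinv_0_lt_compat. nra. }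
    assert (0 <= h y) by nra. unfold h in *. lra.
Qed.

Lemma ln_1p_mul_le p y : 0 <= p <= 1 -> 0 <= y <= 2 -> ln (1 + p * y) <= 2 * (p * ln (1 + y)).
Proof.
  intros Hp Hy.
  assert (y / 2 <= 2 * y / (2 + y)).
  { apply (Rmult_le_reg_r (2 * (2 + y))); [lra|]. field_simplify; [|lra]. nra. }
  pose proof (ln_1p_ge y ltac:(lra)). pose proof (ln_1p_le (p * y) ltac:(nra)). nra.
Qed.

Lemma tangent_le_of_derive_nondecr (f f' : R -> R) a b :
  (forall x, a <= x <= b -> derivable_pt_lim f x (f' x)) ->
  (forall x y, a <= x -> x <= y -> y <= b -> f' x <= f' y) ->
  forall x y, a <= x <= b -> a <= y <= b -> f x + f' x * (y - x) <= f y.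
Proof.
  intros Hd Hmon x y Hx Hy.
  destruct (Rtotal_order x y) as [Hlt | [-> | Hgt]].
  - destruct (MVT_cor2 f f' x y Hlt) as [c [Hc Hc_range]].
    { intros z Hz. apply Hd. lra. }
    assert (f' x <= f' c) by (apply Hmon; lra). nra.
  - lra.
  - destruct (MVT_cor2 f f' y x Hgt) as [c [Hc Hc_range]].
    { intros z Hz. apply Hd. lra. }
    assert (f' c <= f' x) by (apply Hmon; lra). nra.
Qed.

Lemma convex_of_derive_nondecr (f f' : R -> R) a b :
  (forall x, a <= x <= b -> derivable_pt_lim f x (f' x)) ->
  (forall x y, a <= x -> x <= y -> y <= b -> f' x <= f' y) ->
  forall x0 x1 t, a <= x0 <= b -> a <= x1 <= b -> 0 <= t <= 1 ->
  f ((1 - t) * x0 + t * x1) <= (1 - t) * f x0 + t * f x1.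
Proof.
  intros Hd Hmon x0 x1 t Hx0 Hx1 Ht.
  set (x := (1 - t) * x0 + t * x1).
  assert (Hx : a <= x <= b) by (unfold x; nra).
  pose proof (tangent_le_of_derive_nondecr f f' a b Hd Hmon x x0 Hx Hx0) as Hleft.
  pose proof (tangent_le_of_derive_nondecr f f' a b Hd Hmon x x1 Hx Hx1) as Hright.
  assert (Hmid : f' x * ((1 - t) * (x0 - x) + t * (x1 - x)) = 0) by (unfold x; ring).
  apply Rmult_le_compat_l with (r := 1 - t) in Hleft; [|lra].
  apply Rmult_le_compat_l with (r := t) in Hright; [|lra].
  nra.
Qed.

Lemma ln_1p_div_convex c x0 x1 t : 0 <= c -> 0 < x0 -> 0 < x1 -> 0 <= t <= 1 ->
  ln (1 + c / ((1 - t) * x0 + t * x1)) <= (1 - t) * ln (1 + c / x0) + t * ln (1 + c / x1).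
Proof.
  intros Hc Hx0 Hx1 Ht.
  assert (Hpos : forall x, Rmin x0 x1 <= x -> 0 < x).
  { intros x Hx. pose proof (Rmin_glb_lt x0 x1 0 Hx0 Hx1). lra. }
  assert (Hg : forall x, Rmin x0 x1 <= x -> ln (1 + c / x) = ln (x + c) - ln x).
  { intros x Hx. specialize (Hpos x Hx). rewrite <- ln_div by lra. f_equal. field. lra. }
  assert (Hcomb : Rmin x0 x1 <= (1 - t) * x0 + t * x1).
  { pose proof (Rmin_l x0 x1). pose proof (Rmin_r x0 x1). nra. }
  rewrite !Hg by (auto using Rmin_l, Rmin_r).
  apply (convex_of_derive_nondecr (fun x => ln (x + c) - ln x)
           (fun x => - (c / (x * (x + c)))) (Rmin x0 x1) (Rmax x0 x1));
    auto using Rmin_l, Rmin_r, Rmax_l, Rmax_r.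
  - intros x Hx. specialize (Hpos x ltac:(lra)).
    apply is_derive_Reals. auto_derive; [lra|]. field. lra.
  - intros x y Hax Hxy Hyb. pose proof (Hpos x Hax).
    apply Ropp_le_contravar, Rmult_le_compat_l; [lra|].
    apply Rinv_le_contravar; nra.
Qed.

Section ListSums.

Variable A : Type.
Implicit Types (l : list A) (f g : A -> R).

Lemma sum_map_ext l f g : (forall x, In x l -> f x = g x) ->
  fold_right Rplus 0 (map f l) = fold_right Rplus 0 (map g l).
Proof.
  induction l as [|a l IH]; intros H; simpl; [reflexivity|].
  rewrite H, IH; auto with datatypes.
Qed.

Lemma sum_map_le l f g : (forall x, In x l -> f x <= g x) ->
  fold_right Rplus 0 (map f l) <= fold_right Rplus 0 (map g l).
Proof.
  induction l as [|a l IH]; intros H; simpl; [lra|].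
  apply Rplus_le_compat; auto with datatypes.
Qed.

Lemma sum_map_nonneg l f : (forall x, In x l -> 0 <= f x) -> 0 <= fold_right Rplus 0 (map f l).
Proof.
  induction l as [|a l IH]; intros H; simpl; [lra|].
  apply Rplus_le_le_0_compat; auto with datatypes.
Qed.

Lemma sum_map_affine l f g t :
  fold_right Rplus 0 (map (fun x => (1 - t) * f x + t * g x) l) =
  (1 - t) * fold_right Rplus 0 (map f l) + t * fold_right Rplus 0 (map g l).
Proof. induction l as [|a l IH]; simpl; [ring|]. rewrite IH. ring. Qed.

Lemma sum_map_scal l f c :
  fold_right Rplus 0 (map (fun x => c * f x) l) = c * fold_right Rplus 0 (map f l).
Proof. induction l as [|a l IH]; simpl; [ring|]. rewrite IH. ring. Qed.

End ListSums.

Lemma in_others K k j :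
  In j (filter (fun j => negb (Nat.eqb j k)) (seq 0 K)) -> (j < K)%nat /\ j <> k.
Proof.
  intros H. apply filter_In in H as [Hseq Hne]. apply in_seq in Hseq.
  split; [lia|]. intros ->. rewrite Nat.eqb_refl in Hne. discriminate.
Qed.

Lemma beta_bounds Theta alpha gamma k j : 0 <= beta Theta alpha gamma k j <= 1.
Proof.
  unfold beta. pose proof (COS_bound (alpha j + Theta k j - Theta j j - gamma k)). simpl. nra.
Qed.

Definition set_coord {T} (P : nat -> T) m (v : T) : nat -> T :=
  fun j => if Nat.eqb j m then v else P j.

Section Relaxation.

Variables (K : nat) (Theta : nat -> nat -> R) (alpha gamma : nat -> R).

Definition unit_box (P : nat -> R) := forall k, (k < K)%nat -> 0 <= P k <= 1.

Definition interference (P : nat -> R) k :=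
  sumK_ne K k (fun j => P j * beta Theta alpha gamma k j).

Definition weighted_rate (P : nat -> R) :=
  sumK K (fun k => P k * ln (1 + beta Theta alpha gamma k k / (interference P k + / 2))).

Lemma interference_nonneg P k : unit_box P -> 0 <= interference P k.
Proof.
  intros HP. apply sum_map_nonneg. intros j Hj. apply in_others in Hj as [Hj _].
  pose proof (HP j Hj). pose proof (beta_bounds Theta alpha gamma k j). nra.
Qed.

Lemma interference_ext P Q k : (forall j, (j < K)%nat -> j <> k -> P j = Q j) ->
  interference P k = interference Q k.
Proof.
  intros H. apply sum_map_ext. intros j Hj. apply in_others in Hj as [Hj Hk]. rewrite H; auto.
Qed.

Lemma weighted_rate_ext P Q : (forall j, (j < K)%nat -> P j = Q j) ->
  weighted_rate P = weighted_rate Q.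
Proof.
  intros H. apply sum_map_ext. intros k Hk. apply in_seq in Hk.
  rewrite H by lia. rewrite (interference_ext P Q k); auto.
Qed.

Lemma Rsum_indic S : Rsum K Theta (indic S) alpha gamma = weighted_rate (indic S).
Proof.
  apply sum_map_ext. intros k _. fold (interference (indic S) k).
  unfold indic at 1 3. destruct (S k).
  - rewrite !Rmult_1_l. reflexivity.
  - rewrite Rmult_0_l. unfold Rdiv. rewrite Rmult_0_l, Rplus_0_r, ln_1. ring.
Qed.

Lemma Rsum_le_2_weighted_rate P : unit_box P -> Rsum K Theta P alpha gamma <= 2 * weighted_rate P.
Proof.
  intros HP. unfold weighted_rate, sumK. rewrite <- sum_map_scal.
  apply sum_map_le. intros k Hk. apply in_seq in Hk. fold (interference P k).
  pose proof (interference_nonneg P k HP).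
  pose proof (beta_bounds Theta alpha gamma k k).
  set (D := interference P k + / 2).
  assert (HinvD : 0 < / D <= 2).
  { split; [apply Rinv_0_lt_compat; unfold D; lra|].
    rewrite <- (Rinv_inv 2). apply Rinv_le_contravar; unfold D; lra. }
  set (y := beta Theta alpha gamma k k / D).
  assert (Hy : 0 <= y <= 2) by (unfold y, Rdiv; nra).
  replace (P k * beta Theta alpha gamma k k / D) with (P k * y) by (unfold y, D; field; lra).
  apply ln_1p_mul_le; auto. apply HP. lia.
Qed.

Lemma unit_box_set_coord P m v : unit_box P -> 0 <= v <= 1 -> unit_box (set_coord P m v).
Proof. intros HP Hv k Hk. unfold set_coord. destruct (Nat.eqb k m); auto. Qed.

Lemma interference_set_coord_affine P m t k :
  interference (set_coord P m t) k =
  (1 - t) * interference (set_coord P m 0) k + t * interference (set_coord P m 1) k.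
Proof.
  unfold interference, sumK_ne. rewrite <- sum_map_affine.
  apply sum_map_ext. intros j _. unfold set_coord. destruct (Nat.eqb j m); ring.
Qed.

Lemma weighted_rate_set_coord_convex P m t : unit_box P -> 0 <= t <= 1 ->
  weighted_rate (set_coord P m t) <=
  (1 - t) * weighted_rate (set_coord P m 0) + t * weighted_rate (set_coord P m 1).
Proof.
  intros HP Ht. unfold weighted_rate, sumK. rewrite <- sum_map_affine.
  apply sum_map_le. intros k Hk. apply in_seq in Hk.
  destruct (Nat.eq_dec k m) as [-> | Hkm].
  - assert (Hself : forall v, interference (set_coord P m v) m = interference P m).
    { intros v. apply interference_ext. intros j _ Hj.
      unfold set_coord. apply Nat.eqb_neq in Hj. rewrite Hj. reflexivity. }
    rewrite !Hself. unfold set_coord. rewrite Nat.eqb_refl. lra.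
  - assert (Hother : forall v, set_coord P m v k = P k).
    { intros v. unfold set_coord. apply Nat.eqb_neq in Hkm. rewrite Hkm. reflexivity. }
    rewrite !Hother, interference_set_coord_affine.
    pose proof (interference_nonneg (set_coord P m 0) k (unit_box_set_coord P m 0 HP ltac:(lra))).
    pose proof (interference_nonneg (set_coord P m 1) k (unit_box_set_coord P m 1 HP ltac:(lra))).
    set (I0 := interference (set_coord P m 0) k) in *.
    set (I1 := interference (set_coord P m 1) k) in *.
    replace ((1 - t) * I0 + t * I1 + / 2) with ((1 - t) * (I0 + / 2) + t * (I1 + / 2)) by field.
    pose proof (beta_bounds Theta alpha gamma k k).
    pose proof (ln_1p_div_convex (beta Theta alpha gamma k k) (I0 + / 2) (I1 + / 2) t
                  ltac:(lra) ltac:(lra) ltac:(lra) Ht) as Hconv.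
    assert (HPk : 0 <= P k) by (apply HP; lia).
    apply Rmult_le_compat_l with (r := P k) in Hconv; [lra | exact HPk].
Qed.

Lemma weighted_rate_round_coord P m : unit_box P ->
  weighted_rate P <= weighted_rate (set_coord P m 0) \/
  weighted_rate P <= weighted_rate (set_coord P m 1).
Proof.
  intros HP.
  assert (Hfix : weighted_rate (set_coord P m (P m)) = weighted_rate P).
  { apply weighted_rate_ext. intros j _. unfold set_coord.
    destruct (Nat.eqb j m) eqn:E; [apply Nat.eqb_eq in E; subst|]; reflexivity. }
  destruct (le_lt_dec K m) as [Hm | Hm].
  - left. rewrite <- Hfix. right. apply weighted_rate_ext. intros j Hj.
    unfold set_coord. destruct (Nat.eqb j m) eqn:E; [apply Nat.eqb_eq in E; lia | reflexivity].
  - pose proof (weighted_rate_set_coord_convex P m (P m) HP (HP m Hm)) as Hconv.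
    rewrite Hfix in Hconv. pose proof (HP m Hm).
    destruct (Rle_dec (weighted_rate (set_coord P m 0)) (weighted_rate (set_coord P m 1)));
      [right | left]; nra.
Qed.

Lemma weighted_rate_round_from n P : unit_box P ->
  (forall j, (n <= j < K)%nat -> P j = 0 \/ P j = 1) ->
  exists S : nat -> bool, (forall k, (K <= k)%nat -> S k = false) /\
    weighted_rate P <= weighted_rate (indic S).
Proof.
  revert P. induction n as [|n IH]; intros P HP Hbin.
  - exists (fun j => andb (Nat.ltb j K) (if Req_EM_T (P j) 1 then true else false)).
    split.
    + intros k Hk. apply Nat.ltb_ge in Hk. rewrite Hk. reflexivity.
    + right. apply weighted_rate_ext. intros j Hj. unfold indic.
      apply Nat.ltb_lt in Hj as Hj'. rewrite Hj'. simpl.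
      destruct (Req_EM_T (P j) 1); [assumption|].
      destruct (Hbin j ltac:(lia)); [assumption | contradiction].
  - destruct (le_lt_dec K n) as [Hn | Hn].
    { apply IH; [assumption|]. intros j Hj. lia. }
    assert (Hstep : forall v, v = 0 \/ v = 1 ->
              weighted_rate P <= weighted_rate (set_coord P n v) ->
              exists S : nat -> bool, (forall k, (K <= k)%nat -> S k = false) /\
                weighted_rate P <= weighted_rate (indic S)).
    { intros v Hv Hle.
      assert (Hbin' : forall j, (n <= j < K)%nat -> set_coord P n v j = 0 \/ set_coord P n v j = 1).
      { intros j Hj. unfold set_coord. destruct (Nat.eqb j n) eqn:E; [assumption|].
        apply Nat.eqb_neq in E. apply Hbin. lia. }
      assert (Hv01 : 0 <= v <= 1) by (destruct Hv; lra).
      destruct (IH (set_coord P n v) (unit_box_set_coord P n v HP Hv01) Hbin') as [S [HS HSle]].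
      exists S. split; [exact HS | lra]. }
    destruct (weighted_rate_round_coord P n HP) as [Hle | Hle];
      [apply (Hstep 0) | apply (Hstep 1)]; auto.
Qed.

End Relaxation.

Lemma exists_max_bool_vector (F : (nat -> bool) -> R) n (T : nat -> bool) :
  exists S, (forall k, (n <= k)%nat -> S k = T k) /\
    forall S', (forall k, (n <= k)%nat -> S' k = T k) -> F S' <= F S.
Proof.
  revert T. induction n as [|n IH]; intros T.
  - exists T. split; [auto|]. intros S' H.
    replace S' with T; [lra|]. apply functional_extensionality. intros k. rewrite H; auto. lia.
  - assert (Hsplit : forall S', (forall k, (S n <= k)%nat -> S' k = T k) ->
              forall k, (n <= k)%nat -> S' k = set_coord T n (S' n) k).
    { intros S' H k Hk. unfold set_coord. destruct (Nat.eqb k n) eqn:E.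
      - apply Nat.eqb_eq in E. subst. reflexivity.
      - apply Nat.eqb_neq in E. apply H. lia. }
    assert (Htail : forall v S', (forall k, (n <= k)%nat -> S' k = set_coord T n v k) ->
              forall k, (S n <= k)%nat -> S' k = T k).
    { intros v S' H k Hk. rewrite H by lia. unfold set_coord.
      destruct (Nat.eqb k n) eqn:E; [apply Nat.eqb_eq in E; lia | reflexivity]. }
    destruct (IH (set_coord T n true)) as [S1 [HS1 Hmax1]].
    destruct (IH (set_coord T n false)) as [S0 [HS0 Hmax0]].
    set (Smax := if Rle_dec (F S0) (F S1) then S1 else S0).
    assert (Hge : F S0 <= F Smax /\ F S1 <= F Smax).
    { unfold Smax. destruct (Rle_dec (F S0) (F S1)); lra. }
    exists Smax. split.
    + unfold Smax. destruct (Rle_dec (F S0) (F S1)); eapply Htail; eassumption.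
    + intros S' HS'. pose proof (Hsplit S' HS') as HS'n. destruct (S' n).
      * apply Hmax1 in HS'n. lra.
      * apply Hmax0 in HS'n. lra.
Qed.

Theorem lemma2 (K : nat) (Theta : nat -> nat -> R) (P alpha gamma : nat -> R) :
  (forall k, (k < K)%nat -> 0 <= P k <= 1) ->
  (forall k, (k < K)%nat -> - PI <= alpha k < PI) ->
  (forall k, (k < K)%nat -> - PI <= gamma k < PI) ->
  exists S : nat -> bool,
    (forall k, (K <= k)%nat -> S k = false) /\
    (forall S' : nat -> bool,
       (forall k, (K <= k)%nat -> S' k = false) ->
       Rsum K Theta (indic S') alpha gamma <= Rsum K Theta (indic S) alpha gamma) /\
    Rsum K Theta P alpha gamma <= 2 * Rsum K Theta (indic S) alpha gamma.
Proof.
  intros HP _ _.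
  destruct (exists_max_bool_vector (fun S => Rsum K Theta (indic S) alpha gamma) K
              (fun _ => false)) as [S [HS Hmax]].
  exists S. split; [exact HS|]. split; [exact Hmax|].
  destruct (weighted_rate_round_from K Theta alpha gamma K P HP ltac:(intros; lia))
    as [S0 [HS0 Hround]].
  pose proof (Rsum_le_2_weighted_rate K Theta alpha gamma P HP) as Hrelax.
  pose proof (Hmax S0 HS0) as HS0max. rewrite !Rsum_indic in HS0max.
  rewrite Rsum_indic.
  lra.
Qed.
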